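(* Let $X$ be a real Banach space, $V$ a closed subset of $X$, $F=\{x_1,\dots,x_N\}$ a finite subset of $X$, and $f:[0,\infty)^N\to[0,\infty)$ a convex monotone function. Then every sequence $(v_n)\subseteq V$ with $r_f(v_n,F)\to\mathrm{rad}_V^f(F)$ is convergent if and only if for every $\varepsilon>0$ there exists $\delta>0$ such that $\mathrm{diam}(\delta\text{-}\mathrm{Cent}_V^f(F))<\varepsilon$.
   Context: $f$ is monotone if $a\le b$ coordinatewise implies $f(a)\le f(b)$. $r_f(x,F)=f(\|x-x_1\|,\dots,\|x-x_N\|)$, $\mathrm{rad}_V^f(F)=\inf_{v\in V}r_f(v,F)$, and $\delta\text{-}\mathrm{Cent}_V^f(F)=\{v\in V:r_f(v,F)\le\mathrm{rad}_V^f(F)+\delta\}$; $\mathrm{diam}$ denotes the diameter of a set. *)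

From HB Require Import structures.
From mathcomp Require Import all_boot all_order all_algebra.
From mathcomp Require Import all_classical all_reals all_analysis.
Set Implicit Arguments. Unset Strict Implicit. Unset Printing Implicit Defensive.
Import Order.TTheory GRing.Theory Num.Theory.
Import numFieldNormedType.Exports.
Local Open Scope classical_set_scope.
Local Open Scope ring_scope.

Definition nonneg_vec (R : realType) (N : nat) (a : 'I_N -> R) : Prop :=
  forall i, 0 <= a i.

Definition nonneg_on_orthant (R : realType) (N : nat) (f : ('I_N -> R) -> R) : Prop :=
  forall a, nonneg_vec a -> 0 <= f a.

Definition convex_on_orthant (R : realType) (N : nat) (f : ('I_N -> R) -> R) : Prop :=
  forall a b (t : R), nonneg_vec a -> nonneg_vec b -> 0 <= t -> t <= 1 ->
    f (fun i => t * a i + (1 - t) * b i) <= t * f a + (1 - t) * f b.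

Definition monotone_on_orthant (R : realType) (N : nat) (f : ('I_N -> R) -> R) : Prop :=
  forall a b, nonneg_vec a -> nonneg_vec b -> (forall i, a i <= b i) -> f a <= f b.

Definition r_f (R : realType) (X : normedModType R) (N : nat)
  (f : ('I_N -> R) -> R) (F : 'I_N -> X) (x : X) : R :=
  f (fun i => `|x - F i|).

Definition rad_f (R : realType) (X : normedModType R) (N : nat)
  (f : ('I_N -> R) -> R) (V : set X) (F : 'I_N -> X) : R :=
  inf [set r_f f F v | v in V].

Definition cent_f (R : realType) (X : normedModType R) (N : nat)
  (f : ('I_N -> R) -> R) (V : set X) (F : 'I_N -> X) (delta : R) : set X :=
  [set v | V v /\ r_f f F v <= rad_f f V F + delta].

(* diameter of a set, in the extended reals (+oo if unbounded, -oo if empty) *)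
Definition diam (R : realType) (X : normedModType R) (A : set X) : \bar R :=
  ereal_sup [set (`|a - b|)%:E | a in A & b in A].

From HB Require Import structures.
From mathcomp Require Import all_boot all_order all_algebra.
From mathcomp Require Import all_classical all_reals all_analysis.
From mathcomp Require Import lra.
Import Order.TTheory GRing.Theory Num.Theory.
Import numFieldNormedType.Exports.
Local Open Scope classical_set_scope.
Local Open Scope ring_scope.

(* The sets delta-Cent are the sublevel sets of phi := r_f(., F) on V just
   above its infimum.  If their diameters tend to 0, a minimizing sequence
   eventually lies in each of them, hence is Cauchy, hence converges.
   Conversely, if diam (delta-Cent) >= eps for every delta, choose a_n, b_n in
   (1/(2n+2))-Cent at distance > eps/2: the sequence a_0, b_0, a_1, b_1, ... is
   minimizing but not Cauchy. *)

Section MinimizingSequences.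
Set Implicit Arguments. Unset Strict Implicit.
Variables (R : realType) (X : normedModType R) (V : set X) (phi : X -> R).

Definition approx_minimizers (delta : R) : set X :=
  [set v | V v /\ phi v <= inf (phi @` V) + delta].

Lemma approx_minimizersS (d d' : R) :
  d <= d' -> approx_minimizers d `<=` approx_minimizers d'.
Proof.
by move=> dd' v [Vv le_v]; split=> //; apply: le_trans le_v _; rewrite lerD2l.
Qed.

Lemma diam_ge_dist (A : set X) (a b : X) :
  A a -> A b -> ((`|a - b|)%:E <= diam A)%E.
Proof. by move=> Aa Ab; apply: ereal_sup_ubound; exists a => //; exists b. Qed.

Lemma diam_gt_dist (A : set X) (x : R) :
  (x%:E < diam A)%E -> exists a b, [/\ A a, A b & x < `|a - b|].
Proof.
by move=> /ereal_sup_gt[_ [a Aa [b Ab <-]]]; rewrite lte_fin => ?; exists a, b.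
Qed.

Lemma inf_image_le (v : X) :
  has_lbound (phi @` V) -> V v -> inf (phi @` V) <= phi v.
Proof. by move=> lb Vv; apply: ge_inf => //; exists v. Qed.

Lemma approx_minimizers_cvg (w : nat -> X) :
  has_lbound (phi @` V) ->
  (forall k, approx_minimizers k.+1%:R^-1 (w k)) ->
  phi (w k) @[k --> \oo] --> inf (phi @` V).
Proof.
move=> lb hw; apply/cvgrPdist_lt => e e0; near=> k.
have [Vw ub] := hw k.
have small : k.+1%:R^-1 < e by near: k; exact: (near_infty_natSinv_lt (PosNum e0)).
rewrite distrC ger0_norm ?subr_ge0 ?inf_image_le //.
by rewrite ltrBlDl; apply: le_lt_trans ub _; rewrite ltrD2l.
Unshelve. all: by end_near. Qed.

Lemma minimizing_cauchy (v : nat -> X) :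
  (forall eps, 0 < eps -> exists2 delta, 0 < delta &
      (diam (approx_minimizers delta) < eps%:E)%E) ->
  (forall n, V (v n)) -> phi (v n) @[n --> \oo] --> inf (phi @` V) ->
  cauchy (v @ \oo).
Proof.
move=> small Vv /cvgrPdist_lt phi_v; apply/cauchy_ballP => e e0.
have [d d0 diam_d] := small e e0.
have in_d : \forall n \near \oo, approx_minimizers d (v n).
  apply: filterS (phi_v d d0) => n; rewrite ltr_norml => ?; split => //; lra.
near=> x y.
have dx : approx_minimizers d x by near: x; exact: in_d.
have dy : approx_minimizers d y by near: y; exact: in_d.
by rewrite -ball_normE /= -lte_fin; exact: le_lt_trans (diam_ge_dist dx dy) diam_d.
Unshelve. all: by end_near. Qed.

Definition interleave (u w : nat -> X) (k : nat) : X :=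
  if odd k then w k./2 else u k./2.

Lemma interleave_double (u w : nat -> X) n : interleave u w n.*2 = u n.
Proof. by rewrite /interleave odd_double doubleK. Qed.

Lemma interleave_doubleS (u w : nat -> X) n : interleave u w n.*2.+1 = w n.
Proof. by rewrite /interleave /= odd_double uphalf_double. Qed.

Lemma cvg_interleave_dist (u w : nat -> X) :
  cvg (interleave u w @ \oo) ->
  forall e, 0 < e -> \forall n \near \oo, `|u n - w n| < e.
Proof.
move=> /cvg_ex[l /cvgrPdist_lt near_l] e e0.
have [M _ hM] := near_l (e / 2) ltac:(lra).
exists M => // n /= Mn.
have Mn2 : (M <= n.*2)%N by rewrite -addnn (leq_trans Mn) ?leq_addl.
have := hM _ Mn2; have := hM _ (leq_trans Mn2 (leqnSn _)).
rewrite interleave_double interleave_doubleS => lw lu.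
apply: le_lt_trans (ler_distD l _ _) _.
by rewrite distrC [e]splitr; apply: ltrD.
Qed.

Lemma small_diam_of_minimizing_cvg :
  has_lbound (phi @` V) ->
  (forall v : nat -> X, (forall n, V (v n)) ->
      phi (v n) @[n --> \oo] --> inf (phi @` V) -> cvg (v @ \oo)) ->
  forall eps, 0 < eps -> exists2 delta, 0 < delta &
      (diam (approx_minimizers delta) < eps%:E)%E.
Proof.
move=> lb minimizing_cvg eps eps0.
apply: contrapT => not_small.
have far_pair n : exists p : X * X,
    [/\ approx_minimizers n.*2.+2%:R^-1 p.1, approx_minimizers n.*2.+2%:R^-1 p.2
      & eps / 2 < `|p.1 - p.2|].
  have [] := @diam_gt_dist (approx_minimizers n.*2.+2%:R^-1) (eps / 2).
    rewrite ltNge; apply/negP => diam_le; apply: not_small.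
    exists n.*2.+2%:R^-1; first by rewrite invr_gt0.
    by apply: le_lt_trans diam_le _; rewrite lte_fin; lra.
  by move=> a [b ab]; exists (a, b).
have [g gP] := choice far_pair.
pose w := interleave (fst \o g) (snd \o g).
have approx_w k : approx_minimizers k.+1%:R^-1 (w k).
  apply: (@approx_minimizersS (k./2).*2.+2%:R^-1).
    by rewrite lef_pV2 ?posrE ?ltr0n // ler_nat ltnS -leq_half_double.
  by have [g1 g2 _] := gP k./2; rewrite /w /interleave; case: odd.
have w_cvg : cvg (w @ \oo).
  apply: minimizing_cvg; first by move=> k; case: (approx_w k).
  exact: approx_minimizers_cvg.
have [M _ hM] := cvg_interleave_dist w_cvg (ltac:(lra) : 0 < eps / 2).
have [_ _ far] := gP M.
have near_M := hM M (leqnn M).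
by move: (lt_trans far near_M); rewrite ltxx.
Qed.

End MinimizingSequences.

Theorem theorem3p10 (R : realType) (X : completeNormedModType R) (V : set X)
  (N : nat) (F : 'I_N -> X) (f : ('I_N -> R) -> R) :
  closed V ->
  nonneg_on_orthant f -> convex_on_orthant f -> monotone_on_orthant f ->
  ((forall v : nat -> X, (forall n, V (v n)) ->
      (r_f f F (v n) @[n --> \oo] --> rad_f f V F) -> cvg (v @ \oo))
   <->
   (forall eps : R, 0 < eps -> exists2 delta : R, 0 < delta &
      (diam (cent_f f V F delta) < eps%:E)%E)).
Proof.
move=> _ f_ge0 _ _.
have lb : has_lbound (r_f f F @` V).
  by exists 0 => _ [v _ <-]; apply: f_ge0 => i; exact: normr_ge0.
split=> [minimizing_cvg | small v Vv minimizing].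
  exact: small_diam_of_minimizing_cvg lb minimizing_cvg.
by apply/cauchy_cvgP; exact: minimizing_cauchy small Vv minimizing.
Qed.
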